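(* Let $r,K,q\in\mathbb{Z}_{++}$, $A\in\mathbb{R}^{r\times r}$ and $V\in\mathbb{R}^{q\times r}$. Let $U,\tilde U\in\mathbb{R}^{r\times K}$ be matrices each of whose columns has Euclidean norm at most $1$. Define $F(U)=\mathrm{Clip}\big(VU\,\mathrm{Softmax}(U^\top AU/\sqrt r)\big)$. Then $$\|F(U)-F(\tilde U)\|_F^2\le 2K\|V\|_\sigma^2\Big(1+\frac{4K\|A\|_\sigma^2}{r}\Big)\|U-\tilde U\|_F^2 .$$
   Context: $\mathrm{Softmax}$ is applied to each column of the $K\times K$ matrix separately. $\mathrm{Clip}$ maps each column $c$ of its matrix argument to $c/\max\{1,\|c\|_2\}$. $\|\cdot\|_\sigma$ is the operator (spectral) norm and $\|\cdot\|_F$ the Frobenius norm. *)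

From HB Require Import structures.
From mathcomp Require Import all_boot all_order all_algebra.
From mathcomp Require Import all_classical all_reals all_analysis.
Set Implicit Arguments. Unset Strict Implicit. Unset Printing Implicit Defensive.
Import Order.TTheory GRing.Theory Num.Theory.
Local Open Scope ring_scope.
Local Open Scope classical_set_scope.

Section Defs.
Variable R : realType.

Definition vnorm2 (n : nat) (x : 'cV[R]_n) : R :=
  Num.sqrt (\sum_(i < n) x i 0 ^+ 2).

Definition frob (m n : nat) (M : 'M[R]_(m, n)) : R :=
  Num.sqrt (\sum_(i < m) \sum_(j < n) M i j ^+ 2).

Definition opnorm (m n : nat) (M : 'M[R]_(m, n)) : R :=
  sup [set vnorm2 (M *m x) | x in [set x : 'cV[R]_n | vnorm2 x <= 1]].

Definition softmax (K : nat) (M : 'M[R]_K) : 'M[R]_K :=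
  \matrix_(i < K, j < K) (expR (M i j) / \sum_(k < K) expR (M k j)).

Definition clip (m n : nat) (M : 'M[R]_(m, n)) : 'M[R]_(m, n) :=
  \matrix_(i < m, j < n) (M i j / Num.max 1 (vnorm2 (col j M))).

Definition attnF (r K q : nat) (A : 'M[R]_r) (V : 'M[R]_(q, r))
  (U : 'M[R]_(r, K)) : 'M[R]_(q, K) :=
  clip (V *m U *m softmax ((Num.sqrt (r%:R))^-1 *: (U^T *m A *m U))).

End Defs.

(* Clip is, column by column, the projection onto the unit ball, hence
   1-Lipschitz, and ||V X||_F <= ||V||_s ||X||_F; it remains to bound
   U S - U' S' = (U - U') S + U' (S - S'), where S, S' are the softmax matrices.
   The columns of S are probability vectors, so ||(U - U') S||_F^2 <= K ||U - U'||_F^2.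
   The logits differ entrywise by at most 2 ||A||_s ||U - U'||_F / sqrt r, and
   softmax is 1-Lipschitz from l-infinity to l1 (the l1 distance is at most
   2 tanh(d/2) <= d), which bounds every column of U' (S - S') since the columns
   of U' have norm at most 1. *)

From HB Require Import structures.
From mathcomp Require Import all_boot all_order all_algebra.
From mathcomp Require Import all_classical all_reals all_analysis.
From mathcomp Require Import ring lra.
Import Order.TTheory GRing.Theory Num.Theory numFieldNormedType.Exports.
Local Open Scope ring_scope.
Set Implicit Arguments. Unset Strict Implicit. Unset Printing Implicit Defensive.

Section WeightedSums.
Variable R : realFieldType.
Implicit Types (n : nat).

Lemma sumr_sqr_ge0 n (f : 'I_n -> R) : 0 <= \sum_i f i ^+ 2.
Proof. by apply: sumr_ge0 => i _; exact: sqr_ge0. Qed.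

Lemma sumr_mul_sumr n (f g : 'I_n -> R) :
  (\sum_i f i) * (\sum_k g k) = \sum_i \sum_k f i * g k.
Proof. by rewrite big_distrl /=; apply: eq_bigr => i _; rewrite big_distrr. Qed.

(* Lagrange's identity: the difference of the two sides is a weighted sum of squares. *)
Lemma weighted_cauchy_schwarz n (w a b : 'I_n -> R) : (forall i, 0 <= w i) ->
  (\sum_i w i * a i * b i) ^+ 2 <=
    (\sum_i w i * a i ^+ 2) * (\sum_i w i * b i ^+ 2).
Proof.
move=> w_ge0.
have lagrange_ge0 : 0 <= \sum_i \sum_k w i * w k * (a i * b k - a k * b i) ^+ 2.
  by do 2![apply: sumr_ge0 => ? _]; rewrite mulr_ge0 ?sqr_ge0 ?mulr_ge0.
have expand : \sum_i \sum_k w i * w k * (a i * b k - a k * b i) ^+ 2 =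
    \sum_i \sum_k (w i * a i ^+ 2 * (w k * b k ^+ 2)) +
    \sum_i \sum_k (w k * a k ^+ 2 * (w i * b i ^+ 2)) -
    2 * \sum_i \sum_k (w i * a i * b i * (w k * a k * b k)).
  rewrite mulr_sumr -big_split -sumrB /=; apply: eq_bigr => i _.
  rewrite mulr_sumr -big_split -sumrB /=; apply: eq_bigr => k _; ring.
rewrite expand [X in _ + X - _]exchange_big /= in lagrange_ge0.
rewrite expr2 !sumr_mul_sumr; lra.
Qed.

Lemma cauchy_schwarz n (f g : 'I_n -> R) :
  (\sum_i f i * g i) ^+ 2 <= (\sum_i f i ^+ 2) * (\sum_i g i ^+ 2).
Proof.
rewrite (eq_bigr (fun i => 1 * f i * g i)) => [|i _]; last by rewrite mul1r.
rewrite [X in _ <= X * _](eq_bigr (fun i => 1 * f i ^+ 2)) => [|i _]; last by rewrite mul1r.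
rewrite [X in _ <= _ * X](eq_bigr (fun i => 1 * g i ^+ 2)) => [|i _]; last by rewrite mul1r.
exact: weighted_cauchy_schwarz.
Qed.

Lemma sqr_wsum_le n (w a : 'I_n -> R) : (forall i, 0 <= w i) ->
  (\sum_i w i * a i) ^+ 2 <= (\sum_i w i) * (\sum_i w i * a i ^+ 2).
Proof.
move=> w_ge0; rewrite [leRHS]mulrC.
rewrite (eq_bigr (fun i => w i * a i * 1)) => [|i _]; last by rewrite mulr1.
rewrite [X in _ <= _ * X](eq_bigr (fun i => w i * 1 ^+ 2)) => [|i _]; last by rewrite expr1n mulr1.
exact: weighted_cauchy_schwarz.
Qed.

(* On [L, H] the function |t - m| lies below the chord through (L, m - L) and
   (H, H - m); averaging the chord gives the bound. *)
Lemma mean_abs_dev_le n (p t : 'I_n -> R) (L H m : R) :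
  (forall i, 0 <= p i) -> \sum_i p i = 1 -> (forall i, L <= t i <= H) ->
  \sum_i p i * t i = m ->
  (H - L) * \sum_i p i * `|t i - m| <= 2 * (H - m) * (m - L).
Proof.
move=> p_ge0 p_sum1 t_bnd mean_m.
have m_sub c : m - c = \sum_i p i * (t i - c).
  under eq_bigr do rewrite mulrBr.
  by rewrite sumrB -mulr_suml p_sum1 mul1r mean_m.
have mL : 0 <= m - L.
  rewrite m_sub; apply: sumr_ge0 => i _; apply: mulr_ge0 => //.
  by case/andP: (t_bnd i); rewrite subr_ge0.
have mH : 0 <= H - m.
  rewrite -opprB m_sub oppr_ge0; apply: sumr_le0 => i _; apply: mulr_ge0_le0 => //.
  by case/andP: (t_bnd i); rewrite subr_le0.
have chord : \sum_i p i * ((H - t i) * (m - L) + (t i - L) * (H - m)) =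
    2 * (H - m) * (m - L).
  rewrite (eq_bigr (fun i => p i * (t i - H) * (L - m) + p i * (t i - L) * (H - m)));
    last by move=> i _; ring.
  by rewrite big_split /= -!mulr_suml -!m_sub; ring.
rewrite -chord mulr_sumr; apply: ler_sum => i _; rewrite mulrCA; apply: ler_wpM2l => //.
case/andP: (t_bnd i) => tL tH.
have [tm|tm] := leP (t i) m.
- rewrite ler0_norm; [nra | lra].
- rewrite gtr0_norm; [nra | lra].
Qed.
End WeightedSums.

Section Softmax.
Variable R : realType.
Implicit Types (n : nat).

Lemma sinh_le_mul_cosh (t : R) : 0 <= t ->
  expR t - expR (- t) <= t * (expR t + expR (- t)).
Proof.
pose g (s : R) := s * (expR s + expR (- s)) - (expR s - expR (- s)).
have dg (s : R) : is_derive s (1 : R) g (s * (expR s - expR (- s))).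
  by apply: trigger_derive; rewrite /GRing.scale /=; ring.
move=> t_ge0; rewrite -subr_ge0.
have -> : 0 = g 0 by rewrite /g oppr0 subrr mul0r subr0.
apply: (@ger0_derive1_ndecry _ g 0) => //.
- move=> s; rewrite in_itv /= andbT => s_gt0.
  rewrite derive1E derive_val; apply: mulr_ge0; first exact: ltW.
  by rewrite subr_ge0 ler_expR; lra.
- apply: continuous_subspaceT => s.
  exact/differentiable_continuous/derivable1_diffP.
Qed.

(* With h = exp(d/2), [mean_abs_dev_le] bounds the left side by
   2 tanh(d/2) m, and tanh(d/2) <= d/2. *)
Lemma mean_abs_dev_exp_le n (p t : 'I_n -> R) (d m : R) : 0 < d ->
  (forall i, 0 <= p i) -> \sum_i p i = 1 ->
  (forall i, expR (- d) <= t i <= expR d) -> \sum_i p i * t i = m ->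
  \sum_i p i * `|t i - m| <= d * m.
Proof.
move=> d_gt0 p_ge0 p_sum1 t_bnd mean_m.
have mad := mean_abs_dev_le p_ge0 p_sum1 t_bnd mean_m.
have m_ge0 : 0 <= m.
  rewrite -mean_m; apply: sumr_ge0 => i _; apply: mulr_ge0 => //.
  by case/andP: (t_bnd i) => + _; apply: le_trans; exact: expR_ge0.
pose h := expR (d / 2); pose l := expR (- (d / 2)).
have hl : h * l = 1 by rewrite -expRD subrr expR0.
have hh : expR d = h * h by rewrite -expRD -splitr.
have ll : expR (- d) = l * l by rewrite -expRD -opprD -splitr.
have lh : l < h by rewrite ltr_expR; lra.
have hl_gt0 : 0 < h + l by rewrite addr_gt0 ?expR_gt0.
have tanh_le : h - l <= d / 2 * (h + l) by apply: sinh_le_mul_cosh; lra.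
rewrite hh ll in mad; set S := \sum_i _ in mad *.
have S_ge0 : 0 <= S.
  by apply: sumr_ge0 => i _; apply: mulr_ge0 => //; exact: normr_ge0.
have gap_prod_le : (h * h - m) * (m - l * l) <= (h - l) ^+ 2 * m.
  rewrite -subr_ge0.
  have -> : (h - l) ^+ 2 * m - (h * h - m) * (m - l * l) = (m - h * l) ^+ 2.
    by ring.
  exact: sqr_ge0.
have : (h - l) * ((h + l) * S) <= (h - l) * (2 * (h - l) * m) by nra.
rewrite ler_pM2l ?subr_gt0 // => S_le.
rewrite -(ler_pM2l hl_gt0); nra.
Qed.

Definition softmaxv n (x : 'I_n -> R) (i : 'I_n) : R :=
  expR (x i) / \sum_k expR (x k).

Lemma sum_expR_gt0 n (x : 'I_n -> R) : (0 < n)%N -> 0 < \sum_k expR (x k).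
Proof.
move=> n_gt0; rewrite (bigD1 (Ordinal n_gt0)) //= ltr_pwDl ?expR_gt0 //.
by apply: sumr_ge0 => k _; exact: expR_ge0.
Qed.

Lemma softmaxv_ge0 n (x : 'I_n -> R) i : 0 <= softmaxv x i.
Proof. by rewrite divr_ge0 // ?expR_ge0 // sumr_ge0 // => k _; exact: expR_ge0. Qed.

Lemma sum_softmaxv n (x : 'I_n -> R) : (0 < n)%N -> \sum_i softmaxv x i = 1.
Proof. by move=> n_gt0; rewrite -mulr_suml divff // gt_eqF // sum_expR_gt0. Qed.

Lemma softmaxv_sub_l1_le n (x y : 'I_n -> R) (d : R) : (0 < n)%N ->
  (forall i, `|x i - y i| <= d) ->
  \sum_i `|softmaxv x i - softmaxv y i| <= d.
Proof.
move=> n_gt0 xy_le.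
have [d0|d_neq0] := eqVneq d 0.
  have -> : y = x.
    by apply/funext => i; apply/eqP; rewrite eq_sym -subr_eq0 -normr_le0 -d0.
  by rewrite d0 big1 // => i _; rewrite subrr normr0.
have d_gt0 : 0 < d.
  by rewrite lt_def d_neq0 (le_trans (normr_ge0 _) (xy_le (Ordinal n_gt0))).
pose p := softmaxv x; pose t i := expR (y i - x i).
pose m := \sum_i p i * t i.
have Ex_gt0 := sum_expR_gt0 x n_gt0.
have sum_expR_y : \sum_k expR (y k) = m * \sum_k expR (x k).
  rewrite mulr_suml; apply: eq_bigr => k _.
  by rewrite /p /t /softmaxv expRB; field; rewrite expR_eq0 gt_eqF.
have m_gt0 : 0 < m.
  by rewrite -(pmulr_lgt0 _ Ex_gt0) -sum_expR_y sum_expR_gt0.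
have tilt i : `|p i - softmaxv y i| = p i * `|t i - m| / m.
  have -> : p i - softmaxv y i = p i * (m - t i) / m.
    rewrite /softmaxv sum_expR_y /p /t /softmaxv expRB.
    by field; rewrite !gt_eqF ?expR_gt0.
  have : 0 <= p i := softmaxv_ge0 x i.
  move: (p i) => pi pi_ge0.
  by rewrite !normrM normfV (ger0_norm pi_ge0) (gtr0_norm m_gt0) distrC.
rewrite (eq_bigr _ (fun i _ => tilt i)) -mulr_suml ler_pdivrMr //.
apply: mean_abs_dev_exp_le => //.
- by move=> i; exact: softmaxv_ge0.
- exact: sum_softmaxv.
- by move=> i; have := xy_le i; rewrite ler_norml !ler_expR; lra.
Qed.
End Softmax.

Section Norms.
Variable R : realType.
Implicit Types (m n p : nat).

Lemma normr_sum_mul_le n (f g : 'I_n -> R) :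
  `|\sum_i f i * g i| <= Num.sqrt (\sum_i f i ^+ 2) * Num.sqrt (\sum_i g i ^+ 2).
Proof.
rewrite -sqrtrM ?sumr_sqr_ge0 // -sqrtr_sqr ler_sqrt ?mulr_ge0 ?sumr_sqr_ge0 //.
exact: cauchy_schwarz.
Qed.

Lemma vnorm2_ge0 n (x : 'cV[R]_n) : 0 <= vnorm2 x.
Proof. exact: sqrtr_ge0. Qed.

Lemma vnorm2_0 n : vnorm2 (0 : 'cV[R]_n) = 0.
Proof. by rewrite /vnorm2 big1 ?sqrtr0 // => i _; rewrite mxE expr0n. Qed.

Lemma sqr_vnorm2 n (x : 'cV[R]_n) : vnorm2 x ^+ 2 = \sum_i x i 0 ^+ 2.
Proof. exact/sqr_sqrtr/sumr_sqr_ge0. Qed.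

Lemma vnorm2_le n (x : 'cV[R]_n) (a : R) : 0 <= a ->
  (vnorm2 x <= a) = (\sum_i x i 0 ^+ 2 <= a ^+ 2).
Proof. by move=> a_ge0; rewrite -sqr_vnorm2 ler_sqr ?nnegrE ?vnorm2_ge0. Qed.

Lemma vnorm2Z n (a : R) (x : 'cV[R]_n) : vnorm2 (a *: x) = `|a| * vnorm2 x.
Proof.
rewrite /vnorm2 -sqrtr_sqr -sqrtrM ?sqr_ge0 // mulr_sumr.
by congr Num.sqrt; apply: eq_bigr => i _; rewrite mxE exprMn.
Qed.

Lemma normr_dot_le n (x y : 'cV[R]_n) :
  `|\sum_i x i 0 * y i 0| <= vnorm2 x * vnorm2 y.
Proof. exact: normr_sum_mul_le. Qed.

Lemma vnorm2_mulmx_le_sum m n (M : 'M[R]_(m, n)) (x : 'cV[R]_n) :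
  vnorm2 (M *m x) <= \sum_i `|x i 0| * vnorm2 (col i M).
Proof.
rewrite vnorm2_le; last by apply: sumr_ge0 => i _; rewrite mulr_ge0 ?vnorm2_ge0.
rewrite expr2 sumr_mul_sumr.
under eq_bigr do rewrite mxE expr2 sumr_mul_sumr.
rewrite exchange_big /=; apply: ler_sum => i _.
rewrite exchange_big /=; apply: ler_sum => l _.
have -> : \sum_k M k i * x i 0 * (M k l * x l 0) =
    x i 0 * x l 0 * \sum_k (col i M) k 0 * (col l M) k 0.
  by rewrite mulr_sumr; apply: eq_bigr => k _; rewrite !mxE; ring.
apply: le_trans (ler_norm _) _; rewrite !normrM mulrACA.
by rewrite ler_wpM2l ?mulr_ge0 // normr_dot_le.
Qed.

Lemma sqr_frob m n (M : 'M[R]_(m, n)) :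
  frob M ^+ 2 = \sum_j vnorm2 (col j M) ^+ 2.
Proof.
rewrite sqr_sqrtr; last by apply: sumr_ge0 => i _; exact: sumr_sqr_ge0.
rewrite exchange_big; apply: eq_bigr => j _; rewrite sqr_vnorm2.
by apply: eq_bigr => i _; rewrite mxE.
Qed.

Lemma frob_ge0 m n (M : 'M[R]_(m, n)) : 0 <= frob M.
Proof. exact: sqrtr_ge0. Qed.

Lemma vnorm2_col_le_frob m n (M : 'M[R]_(m, n)) j : vnorm2 (col j M) <= frob M.
Proof.
rewrite -ler_sqr ?nnegrE ?vnorm2_ge0 ?frob_ge0 // sqr_frob (bigD1 j) //=.
by rewrite lerDl; apply: sumr_ge0 => k _; exact: sqr_ge0.
Qed.

Lemma vnorm2_mulmx_le_frob m n (M : 'M[R]_(m, n)) (x : 'cV[R]_n) :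
  vnorm2 (M *m x) <= frob M * vnorm2 x.
Proof.
apply: le_trans (vnorm2_mulmx_le_sum M x) (le_trans (ler_norm _) _).
apply: le_trans (normr_sum_mul_le _ _) _.
have -> : \sum_i `|x i 0| ^+ 2 = \sum_i x i 0 ^+ 2.
  by apply: eq_bigr => i _; rewrite real_normK ?num_real.
by rewrite -sqr_frob sqrtr_sqr ger0_norm ?frob_ge0 // mulrC.
Qed.
End Norms.

Section OperatorNorm.
Variable R : realType.
Variables m n : nat.
Variable M : 'M[R]_(m, n).
Local Open Scope classical_set_scope.

Lemma has_sup_opnorm :
  has_sup [set vnorm2 (M *m x) | x in [set x : 'cV[R]_n | vnorm2 x <= 1]].
Proof.
split; first by exists (vnorm2 (M *m 0)), 0; rewrite //= vnorm2_0 ler01.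
exists (frob M) => _ [x x_le1 <-].
apply: le_trans (vnorm2_mulmx_le_frob M x) _.
by rewrite -[leRHS]mulr1 ler_wpM2l ?frob_ge0.
Qed.

Lemma opnorm_ge0 : 0 <= opnorm M.
Proof.
apply: le_trans (vnorm2_ge0 (M *m 0)) (sup_upper_bound has_sup_opnorm _).
by exists 0 => //=; rewrite vnorm2_0 ler01.
Qed.

Lemma vnorm2_mulmx_le (x : 'cV[R]_n) : vnorm2 (M *m x) <= opnorm M * vnorm2 x.
Proof.
have [x0|x_neq0] := eqVneq (vnorm2 x) 0.
  by have := vnorm2_mulmx_le_frob M x; rewrite x0 !mulr0.
have x_gt0 : 0 < vnorm2 x by rewrite lt_def x_neq0 vnorm2_ge0.
have unit_x : vnorm2 ((vnorm2 x)^-1 *: x) <= 1.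
  by rewrite vnorm2Z normfV gtr0_norm // mulVf.
have : vnorm2 (M *m ((vnorm2 x)^-1 *: x)) <= opnorm M.
  by apply: (sup_upper_bound has_sup_opnorm); exists ((vnorm2 x)^-1 *: x).
by rewrite -scalemxAr vnorm2Z normfV gtr0_norm // -ler_pdivlMl ?invr_gt0 // invrK mulrC.
Qed.
End OperatorNorm.

Section UnitBallProjection.
Variable R : realType.
Variable n : nat.
Implicit Types x y z : 'cV[R]_n.

Definition unit_ball_proj x : 'cV[R]_n := (Num.max 1 (vnorm2 x))^-1 *: x.

Lemma vnorm2_unit_ball_proj_le1 x : vnorm2 (unit_ball_proj x) <= 1.
Proof.
have a_gt0 : 0 < Num.max 1 (vnorm2 x) by rewrite lt_max ltr01.
rewrite vnorm2Z ger0_norm ?invr_ge0 ?(ltW a_gt0) // mulrC ler_pdivrMr // mul1r.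
by rewrite le_max lexx orbT.
Qed.

(* The projection p of x satisfies <x - p, z - p> <= 0 on the ball: x - p is
   a nonnegative multiple of p, and <p, z> <= 1 = |p|^2 when x is outside. *)
Lemma unit_ball_proj_obtuse x z : vnorm2 z <= 1 ->
  \sum_i (x - unit_ball_proj x) i 0 * (z - unit_ball_proj x) i 0 <= 0.
Proof.
move=> z_le1; set a := Num.max 1 (vnorm2 x); set p := unit_ball_proj x.
have a_ge1 : 1 <= a by rewrite le_max lexx.
have x_eq : x = a *: p by rewrite scalerA divff ?scale1r // gt_eqF ?(lt_le_trans ltr01).
have -> : \sum_i (x - p) i 0 * (z - p) i 0 =
    (a - 1) * (\sum_i p i 0 * z i 0 - \sum_i p i 0 ^+ 2).
  by rewrite -sumrB mulr_sumr; apply: eq_bigr => i _; rewrite x_eq !mxE; ring.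
have [->|a_neq1] := eqVneq a 1; first by rewrite subrr mul0r.
have x_gt1 : 1 < vnorm2 x.
  by rewrite ltNge; apply: contra a_neq1 => x_le1; rewrite /a max_l.
have a_eq : a = vnorm2 x by rewrite /a max_r // ltW.
have p_norm1 : vnorm2 p = 1.
  have x_gt0 : 0 < vnorm2 x := lt_trans ltr01 x_gt1.
  by rewrite /p /unit_ball_proj -/a vnorm2Z normfV a_eq gtr0_norm ?mulVf ?gt_eqF.
rewrite mulr_ge0_le0 ?subr_ge0 // subr_le0 -sqr_vnorm2 p_norm1 expr1n.
apply: le_trans (ler_norm _) (le_trans (normr_dot_le p z) _).
by rewrite p_norm1 mul1r.
Qed.

(* Add the two obtuse-angle inequalities for the pairs (x, proj y) and (y, proj x). *)
Lemma unit_ball_proj_lipschitz x y :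
  vnorm2 (unit_ball_proj x - unit_ball_proj y) <= vnorm2 (x - y).
Proof.
set p := unit_ball_proj x; set q := unit_ball_proj y.
have obt_x := unit_ball_proj_obtuse x (vnorm2_unit_ball_proj_le1 y).
have obt_y := unit_ball_proj_obtuse y (vnorm2_unit_ball_proj_le1 x).
have key : vnorm2 (p - q) ^+ 2 <= \sum_i (p - q) i 0 * (x - y) i 0.
  rewrite sqr_vnorm2 -subr_ge0.
  have -> : \sum_i (p - q) i 0 * (x - y) i 0 - \sum_i (p - q) i 0 ^+ 2 =
      - (\sum_i (x - p) i 0 * (q - p) i 0 + \sum_i (y - q) i 0 * (p - q) i 0).
    by rewrite -big_split -sumrB -sumrN; apply: eq_bigr => i _; rewrite /= !mxE; ring.
  by rewrite oppr_ge0; apply: le_trans (lerD obt_x obt_y) _; rewrite addr0.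
have [pq0|pq_gt0] := eqVneq (vnorm2 (p - q)) 0; first by rewrite pq0 vnorm2_ge0.
have pq_pos : 0 < vnorm2 (p - q) by rewrite lt_def pq_gt0 vnorm2_ge0.
rewrite -(ler_pM2l pq_pos) -expr2.
exact: le_trans key (le_trans (ler_norm _) (normr_dot_le _ _)).
Qed.
End UnitBallProjection.

Section FrobeniusBounds.
Variable R : realType.
Implicit Types (m n p : nat).

Lemma col_mulmx m n p (A : 'M[R]_(m, n)) (B : 'M[R]_(n, p)) j :
  col j (A *m B) = A *m col j B.
Proof. by rewrite !colE mulmxA. Qed.

Lemma colB m n (A B : 'M[R]_(m, n)) j : col j (A - B) = col j A - col j B.
Proof. by rewrite !colE mulmxBl. Qed.

Lemma col_clip m n (M : 'M[R]_(m, n)) j : col j (clip M) = unit_ball_proj (col j M).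
Proof. by apply/matrixP => i k; rewrite /unit_ball_proj !mxE mulrC. Qed.

Lemma sqr_frob_clip_sub_le m n (M N : 'M[R]_(m, n)) :
  frob (clip M - clip N) ^+ 2 <= frob (M - N) ^+ 2.
Proof.
rewrite !sqr_frob; apply: ler_sum => j _.
rewrite !colB !col_clip ler_sqr ?nnegrE ?vnorm2_ge0 //.
exact: unit_ball_proj_lipschitz.
Qed.

Lemma sqr_frob_mulmx_le m n p (V : 'M[R]_(m, n)) (X : 'M[R]_(n, p)) :
  frob (V *m X) ^+ 2 <= opnorm V ^+ 2 * frob X ^+ 2.
Proof.
rewrite !sqr_frob mulr_sumr; apply: ler_sum => j _.
rewrite col_mulmx -exprMn ler_sqr ?nnegrE ?mulr_ge0 ?vnorm2_ge0 ?opnorm_ge0 //.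
exact: vnorm2_mulmx_le.
Qed.

Lemma sqr_frob_add_le m n (X Y : 'M[R]_(m, n)) :
  frob (X + Y) ^+ 2 <= 2 * frob X ^+ 2 + 2 * frob Y ^+ 2.
Proof.
rewrite !sqr_sqrtr; try by apply: sumr_ge0 => i _; exact: sumr_sqr_ge0.
rewrite !mulr_sumr -big_split; apply: ler_sum => i _.
rewrite !mulr_sumr -big_split; apply: ler_sum => j _.
by rewrite /= mxE; have := sqr_ge0 (X i j - Y i j); rewrite !expr2; lra.
Qed.

Lemma sqr_frob_mulmx_stochastic_le m n p (D : 'M[R]_(m, n)) (S : 'M[R]_(n, p)) :
  (forall i j, 0 <= S i j) -> (forall j, \sum_i S i j = 1) ->
  frob (D *m S) ^+ 2 <= p%:R * frob D ^+ 2.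
Proof.
move=> S_ge0 S_sum1.
have S_le1 i j : S i j <= 1.
  by rewrite -(S_sum1 j) (bigD1 i) //= lerDl sumr_ge0.
have col_le j : vnorm2 (col j (D *m S)) ^+ 2 <= \sum_i S i j * vnorm2 (col i D) ^+ 2.
  apply: le_trans (_ : (\sum_i S i j * vnorm2 (col i D)) ^+ 2 <= _); last first.
    by have := sqr_wsum_le (fun i => vnorm2 (col i D)) (S_ge0^~ j); rewrite S_sum1 mul1r.
  rewrite ler_sqr ?nnegrE ?vnorm2_ge0 ?sumr_ge0 // => [|i _]; last by rewrite mulr_ge0 ?vnorm2_ge0.
  rewrite col_mulmx; apply: le_trans (vnorm2_mulmx_le_sum _ _) _.
  by under eq_bigr do rewrite mxE ger0_norm //.
rewrite sqr_frob; apply: le_trans (ler_sum _ (fun j _ => col_le j)) _.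
rewrite exchange_big sqr_frob mulr_sumr; apply: ler_sum => i _ /=.
rewrite -mulr_suml; apply: (ler_wpM2r (sqr_ge0 _)).
by rewrite -[p in p%:R]card_ord -sumr_const; apply: ler_sum => j _.
Qed.

Lemma sqr_frob_mulmx_l1_le m n p (W : 'M[R]_(m, n)) (E : 'M[R]_(n, p)) (e : R) :
  (forall i, vnorm2 (col i W) <= 1) -> (forall j, \sum_i `|E i j| <= e) ->
  frob (W *m E) ^+ 2 <= p%:R * e ^+ 2.
Proof.
move=> W_le1 E_le.
rewrite sqr_frob mulr_natl -[p in _ *+ p]card_ord -sumr_const; apply: ler_sum => j _.
have col_le : vnorm2 (col j (W *m E)) <= e.
  rewrite col_mulmx; apply: le_trans (vnorm2_mulmx_le_sum _ _) (le_trans _ (E_le j)).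
  by apply: ler_sum => i _; rewrite mxE ler_piMr.
by rewrite ler_sqr ?nnegrE ?vnorm2_ge0 // (le_trans (vnorm2_ge0 _) col_le).
Qed.
End FrobeniusBounds.

Section Attention.
Variable R : realType.

Lemma softmaxE K (M : 'M[R]_K) i j : softmax M i j = softmaxv (fun k => M k j) i.
Proof. by rewrite mxE. Qed.

Lemma softmax_ge0 K (M : 'M[R]_K) i j : 0 <= softmax M i j.
Proof. by rewrite softmaxE softmaxv_ge0. Qed.

Lemma sum_softmax_col K (M : 'M[R]_K) j : \sum_i softmax M i j = 1.
Proof.
by under eq_bigr do rewrite softmaxE; apply: sum_softmaxv; exact: leq_ltn_trans (ltn_ord j).
Qed.

Lemma softmax_sub_l1_le K (M N : 'M[R]_K) j (d : R) :
  (forall i, `|M i j - N i j| <= d) -> \sum_i `|(softmax M - softmax N) i j| <= d.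
Proof.
move=> MN_le.
rewrite (eq_bigr (fun i => `|softmaxv (fun k => M k j) i - softmaxv (fun k => N k j) i|));
  last by move=> i _; rewrite !mxE.
by apply: softmaxv_sub_l1_le => //; exact: leq_ltn_trans (ltn_ord j).
Qed.

Lemma quad_form_entry r K (X Y : 'M[R]_(r, K)) (A : 'M[R]_r) i j :
  (X^T *m A *m Y) i j = \sum_k (col i X) k 0 * (A *m col j Y) k 0.
Proof.
by rewrite -mulmxA mxE; apply: eq_bigr => k _; rewrite -col_mulmx !mxE.
Qed.

Lemma mxsubE m n (X Y : 'M[R]_(m, n)) i j : (X - Y) i j = X i j - Y i j.
Proof. by rewrite !mxE. Qed.

Lemma mxscaleE m n (a : R) (X : 'M[R]_(m, n)) i j : (a *: X) i j = a * X i j.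
Proof. by rewrite mxE. Qed.

Lemma quad_form_sub_entry_le r K (A : 'M[R]_r) (U W : 'M[R]_(r, K)) i j :
  (forall k, vnorm2 (col k U) <= 1) -> (forall k, vnorm2 (col k W) <= 1) ->
  `|(U^T *m A *m U) i j - (W^T *m A *m W) i j| <= 2 * opnorm A * frob (U - W).
Proof.
move=> U_le1 W_le1; rewrite -mxsubE.
have -> : U^T *m A *m U - W^T *m A *m W =
    (U - W)^T *m A *m U + W^T *m A *m (U - W).
  by rewrite linearB /= !mulmxBl mulmxBr addrA subrK.
have A_ge0 := opnorm_ge0 A.
have le_U : `|\sum_k (col i (U - W)) k 0 * (A *m col j U) k 0| <= opnorm A * frob (U - W).
  apply: le_trans (normr_dot_le _ _) _; rewrite mulrC.
  apply: ler_pM; rewrite ?vnorm2_ge0 ?vnorm2_col_le_frob //.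
  by apply: le_trans (vnorm2_mulmx_le _ _) _; rewrite -[leRHS]mulr1 ler_wpM2l.
have le_W : `|\sum_k (col i W) k 0 * (A *m col j (U - W)) k 0| <= opnorm A * frob (U - W).
  apply: le_trans (normr_dot_le _ _) _; rewrite -[leRHS]mul1r.
  apply: ler_pM; rewrite ?vnorm2_ge0 //.
  by apply: le_trans (vnorm2_mulmx_le _ _) _; rewrite ler_wpM2l ?vnorm2_col_le_frob.
rewrite mxE !quad_form_entry; apply: le_trans (ler_normD _ _) _.
by have := lerD le_U le_W; lra.
Qed.

Lemma sqr_frob_softmax_attention_sub_le r K (U W : 'M[R]_(r, K)) (M N : 'M[R]_K) (e : R) :
  (forall k, vnorm2 (col k W) <= 1) -> (forall i j, `|M i j - N i j| <= e) ->
  frob (U *m softmax M - W *m softmax N) ^+ 2 <=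
    2 * (K%:R * frob (U - W) ^+ 2) + 2 * (K%:R * e ^+ 2).
Proof.
move=> W_le1 MN_le.
have -> : U *m softmax M - W *m softmax N =
    (U - W) *m softmax M + W *m (softmax M - softmax N).
  by rewrite mulmxBl mulmxBr addrA subrK.
apply: le_trans (sqr_frob_add_le _ _) (lerD _ _); rewrite ler_pM2l //.
- exact: sqr_frob_mulmx_stochastic_le (softmax_ge0 M) (sum_softmax_col M).
- by apply: sqr_frob_mulmx_l1_le W_le1 _ => j; exact: softmax_sub_l1_le.
Qed.
End Attention.

Unset Implicit Arguments.

Theorem mainTheorem13 (R : realType) (r K q : nat)
  (hr : (0 < r)%N) (hK : (0 < K)%N) (hq : (0 < q)%N)
  (A : 'M[R]_r) (V : 'M[R]_(q, r)) (U Ut : 'M[R]_(r, K))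
  (hU : forall j : 'I_K, vnorm2 (col j U) <= 1)
  (hUt : forall j : 'I_K, vnorm2 (col j Ut) <= 1) :
  frob (attnF A V U - attnF A V Ut) ^+ 2 <=
    2 * K%:R * opnorm V ^+ 2 * (1 + 4 * K%:R * opnorm A ^+ 2 / r%:R)
      * frob (U - Ut) ^+ 2.
Proof.
rewrite /attnF; set c := (Num.sqrt r%:R)^-1.
set F := frob (U - Ut); set a := opnorm A.
have c_ge0 : 0 <= c by rewrite invr_ge0 sqrtr_ge0.
have logits_le i j :
    `|(c *: (U^T *m A *m U)) i j - (c *: (Ut^T *m A *m Ut)) i j| <= c * (2 * a * F).
  rewrite !mxscaleE -mulrBr normrM ger0_norm //; apply: ler_wpM2l => //.
  exact: quad_form_sub_entry_le.
apply: le_trans (sqr_frob_clip_sub_le _ _) _.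
rewrite -[V *m U *m _]mulmxA -[V *m Ut *m _]mulmxA -mulmxBr.
apply: le_trans (sqr_frob_mulmx_le _ _) _.
apply: le_trans (ler_wpM2l (sqr_ge0 _) (sqr_frob_softmax_attention_sub_le U hUt logits_le)) _.
have c2 : c ^+ 2 = r%:R^-1 by rewrite exprVn sqr_sqrtr ?ler0n.
have K_ge1 : 1 <= K%:R :> R by rewrite ler1n.
rewrite -/F exprMn c2.
have -> : opnorm V ^+ 2 * (2 * (K%:R * F ^+ 2) + 2 * (K%:R * (r%:R^-1 * (2 * a * F) ^+ 2)))
    = opnorm V ^+ 2 * F ^+ 2 * (2 * K%:R * (1 + 4 * (a ^+ 2 / r%:R))) by ring.
have -> : 2 * K%:R * opnorm V ^+ 2 * (1 + 4 * K%:R * a ^+ 2 / r%:R) * F ^+ 2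
    = opnorm V ^+ 2 * F ^+ 2 * (2 * K%:R * (1 + 4 * K%:R * (a ^+ 2 / r%:R))) by ring.
apply: ler_wpM2l; first by rewrite mulr_ge0 ?sqr_ge0.
have : 0 <= (K%:R - 1) * (K%:R * (a ^+ 2 / r%:R)).
  by apply: mulr_ge0; rewrite ?subr_ge0 // mulr_ge0 ?divr_ge0 ?sqr_ge0 ?ler0n.
nra.
Qed.
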